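(* Let $m\ge 2$ be an integer and $n'=2^{2m-1}-2^m-2^{m-1}$. Let $\mathbf{C}$ be a binary linear $[2^{2m}-1,3m]$ code whose set of nonzero weights is $\{2^{2m-1}-2^{m-1},\,2^{2m-1},\,2^{2m-1}+2^{m-1}\}$. Then the code $\mathbf{C}'$ obtained from $\mathbf{C}$ by the extension construction is a minimal binary linear code with parameters $[2^{2m}-1+n',\ 3m,\ 2^{2m-1}-2^{m-1}]_2$ and maximum weight $2^{2m}-2^m$, and it violates the Ashikhmin–Barg condition.
   Context: Extension construction for a binary linear $[N,K]$ code $\mathbf{D}$ with $K\ge2$, minimum nonzero weight $w_{min}$, maximum weight $w_{max}$ and $n'=2w_{min}-w_{max}\ge 1$: choose a basis $\mathbf{r}_1,\dots,\mathbf{r}_K$ with $wt(\mathbf{r}_1)=w_{max}$, $wt(\mathbf{r}_2)=w_{min}$; the extended code is generated by $(\mathbf{1},\mathbf{r}_1),(\mathbf{0},\mathbf{r}_2),\dots,(\mathbf{0},\mathbf{r}_K)$ in $\mathbf{F}_2^{n'+N}$, where $\mathbf{1},\mathbf{0}\in\mathbf{F}_2^{n'}$ are all-one and zero vectors. Minimal code: any two nonzero codewords with nested supports are equal (binary case). Ashikhmin–Barg condition (binary): $w_{min}/w_{max}>1/2$. (Codes $\mathbf{C}$ as in the hypothesis exist, e.g. the Kasami codes.) *)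

From HB Require Import structures.
From mathcomp Require Import all_boot all_order all_algebra.
Set Implicit Arguments. Unset Strict Implicit. Unset Printing Implicit Defensive.
Import Order.TTheory GRing.Theory Num.Theory.
Local Open Scope ring_scope.

Definition supp (n : nat) (v : 'rV['F_2]_n) : {set 'I_n} := [set j | v 0 j != 0].
Definition wt (n : nat) (v : 'rV['F_2]_n) : nat := #|supp v|.

Definition is_nz_weight (n : nat) (C : {vspace 'rV['F_2]_n}) (w : nat) : Prop :=
  exists c, [/\ c \in C, c != 0 & wt c = w].

Definition min_weight (n : nat) (C : {vspace 'rV['F_2]_n}) (d : nat) : Prop :=
  is_nz_weight C d /\ forall c, c \in C -> c != 0 -> (d <= wt c)%N.

Definition max_weight (n : nat) (C : {vspace 'rV['F_2]_n}) (w : nat) : Prop :=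
  is_nz_weight C w /\ forall c, c \in C -> (wt c <= w)%N.

Definition minimal_code (n : nat) (C : {vspace 'rV['F_2]_n}) : Prop :=
  forall c1 c2, c1 \in C -> c2 \in C -> c1 != 0 -> c2 != 0 ->
    supp c1 \subset supp c2 -> c1 = c2.

Definition ashikhmin_barg (n : nat) (C : {vspace 'rV['F_2]_n}) : Prop :=
  exists wmin wmax, [/\ min_weight C wmin, max_weight C wmax &
    (1 / 2 : rat) < wmin%:R / wmax%:R].

(* Extension construction: given the basis r = [r_1; ...; r_K] (r`_0 = r_1),
   the extended code of length n' + N is spanned by (1, r_1), (0, r_2), ... *)
Definition ext_gen (n' N : nat) (r : seq 'rV['F_2]_N) : seq 'rV['F_2]_(n' + N) :=
  [seq row_mx (const_mx (if i == 0%N then 1 else 0)) r`_i | i <- iota 0 (size r)].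

Definition ext_code (n' N : nat) (r : seq 'rV['F_2]_N) : {vspace 'rV['F_2]_(n' + N)} :=
  <<ext_gen n' r>>%VS.

From HB Require Import structures.
From mathcomp Require Import all_boot all_order all_algebra.
From mathcomp Require Import zify lra.
Set Implicit Arguments. Unset Strict Implicit. Unset Printing Implicit Defensive.
Import Order.TTheory GRing.Theory Num.Theory.
Local Open Scope ring_scope.

(* Every word (l 1, c) of the extended code is determined by its tail c, an
   element of C, because r is free: the projection onto the last coordinates
   is injective on it.  So the extended code inherits minimality from C, whose
   weights lie in [w-, w+] with w+ < 2 w-, too narrow for the difference of
   two nested codewords.  Appending the prefix adds 0 or n' to a weight: the
   minimum weight stays w- = 2^(2m-1) - 2^(m-1) (attained by (0, r_2)), while
   (1, r_1) reaches n' + w+ = 2^(2m) - 2^m = 2 w-, so w_min / w_max = 1/2. *)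

Lemma F2_eq01 (x : 'F_2) : (x == 0) || (x == 1).
Proof. by case: x => [[|[|]]]. Qed.

Lemma wt_eq0 n (v : 'rV['F_2]_n) : (wt v == 0%N) = (v == 0).
Proof.
rewrite cards_eq0; apply/eqP/eqP => [supp0|->]; last first.
  by apply/setP => j; rewrite !inE mxE eqxx.
apply/rowP => j; apply/eqP; rewrite mxE.
by have := in_set0 j; rewrite -supp0 inE => /negbFE.
Qed.

Lemma wt0 n : wt (0 : 'rV['F_2]_n) = 0%N.
Proof. by apply/eqP; rewrite wt_eq0. Qed.

Lemma wt_le n (v : 'rV['F_2]_n) : (wt v <= n)%N.
Proof. by rewrite -[X in (_ <= X)%N]card_ord max_card. Qed.

Lemma wt_row_mx n1 n2 (u : 'rV['F_2]_n1) (v : 'rV['F_2]_n2) :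
  wt (row_mx u v) = (wt u + wt v)%N.
Proof.
rewrite /wt /supp -!sum1_card big_mkcond big_split_ord /=.
by congr (_ + _)%N; rewrite [RHS]big_mkcond; apply: eq_bigr => j _;
  rewrite !inE ?row_mxEl ?row_mxEr.
Qed.

Lemma wt_const_mx n (a : 'F_2) : wt (const_mx a : 'rV['F_2]_n) = ((a != 0%R) * n)%N.
Proof.
have [->|a_neq0] := eqVneq a 0; first exact: wt0.
by rewrite mul1n -[RHS]card_ord; apply: eq_card => j; rewrite !inE mxE a_neq0.
Qed.

Lemma supp_subset_wtB n (u v : 'rV['F_2]_n) :
  supp u \subset supp v -> wt (v - u) = (wt v - wt u)%N.
Proof.
move=> suv; rewrite /wt -cardsDS //; apply: eq_card => j.
move/subsetP/(_ j): suv; rewrite !inE !mxE subr_eq0.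
by case/orP: (F2_eq01 (u 0 j)) => /eqP ->; case/orP: (F2_eq01 (v 0 j)) => /eqP ->;
  rewrite ?eqxx ?oner_eq0 // => /(_ isT).
Qed.

Section CodeWeights.
Variables (n : nat) (D : {vspace 'rV['F_2]_n}).

Lemma is_nz_weightW c : c \in D -> (0 < wt c)%N -> is_nz_weight D (wt c).
Proof. by move=> cD wt_gt0; exists c; split; rewrite // -wt_eq0 -lt0n. Qed.

Lemma minimal_code_of_weights lo hi :
  (hi < lo.*2)%N -> (forall c, c \in D -> c != 0 -> (lo <= wt c <= hi)%N) ->
  minimal_code D.
Proof.
move=> hi_lt wtD c1 c2 c1D c2D c1_neq0 c2_neq0 s12; apply/eqP/negPn/negP => c12.
have /andP[lo_le1 _] := wtD _ c1D c1_neq0.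
have /andP[_ le_hi2] := wtD _ c2D c2_neq0.
have /andP[lo_le _] : (lo <= wt (c2 - c1) <= hi)%N.
  by apply: wtD; rewrite ?rpredB // subr_eq0 eq_sym.
move: lo_le; rewrite supp_subset_wtB //; lia.
Qed.

Lemma min_weight_uniq w1 w2 : min_weight D w1 -> min_weight D w2 -> w1 = w2.
Proof.
move=> [[c1 [c1D c1_neq0 <-]] min1] [[c2 [c2D c2_neq0 <-]] min2].
by apply/eqP; rewrite eqn_leq min1 ?min2.
Qed.

Lemma max_weight_uniq w1 w2 : max_weight D w1 -> max_weight D w2 -> w1 = w2.
Proof.
move=> [[c1 [c1D _ <-]] max1] [[c2 [c2D _ <-]] max2].
by apply/eqP; rewrite eqn_leq max1 ?max2.
Qed.

Lemma not_ashikhmin_barg wmin wmax :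
  min_weight D wmin -> max_weight D wmax -> (wmin.*2 <= wmax)%N ->
  ~ ashikhmin_barg D.
Proof.
move=> min_wmin max_wmax le_wmax [w1 [w2 [min_w1 max_w2 ab]]]; move: ab.
rewrite -(min_weight_uniq min_wmin min_w1) -(max_weight_uniq max_wmax max_w2).
apply/negP; rewrite -leNgt.
have [->|wmax_gt0] := posnP wmax; first by rewrite invr0 mulr0.
rewrite -[wmin.*2]muln2 -(ler_nat rat) natrM in le_wmax.
rewrite ler_pdivrMr ?ltr0n //; lra.
Qed.
End CodeWeights.

Section Extension.
Variables (n' N : nat) (r : seq 'rV['F_2]_N).
Local Notation C' := (ext_code n' r).
Local Notation rsub := (linfun (@rsubmx 'F_2 1 n' N)).

Lemma size_ext_gen : size (ext_gen n' r) = size r.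
Proof. by rewrite size_map size_iota. Qed.

Lemma nth_ext_gen i : (i < size r)%N ->
  (ext_gen n' r)`_i = row_mx (const_mx (if i == 0%N then 1 else 0)) r`_i.
Proof. by move=> lt_i; rewrite (nth_map 0%N) ?size_iota // nth_iota. Qed.

Lemma ext_gen_in_code i : (i < size r)%N -> (ext_gen n' r)`_i \in C'.
Proof. by move=> lt_i; rewrite memv_span // mem_nth ?size_ext_gen. Qed.

Lemma map_rsubmx_ext_gen : map rsubmx (ext_gen n' r) = r.
Proof.
rewrite /ext_gen -map_comp -[RHS](mkseq_nth 0).
by apply: eq_map => i /=; rewrite row_mxKr.
Qed.

Lemma limg_rsubmx_ext_code : (rsub @: C' = <<r>>)%VS.
Proof.
rewrite limg_span -[in RHS]map_rsubmx_ext_gen; congr <<_>>%VS.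
by apply: eq_map => v; rewrite lfunE.
Qed.

Lemma rsubmx_ext_code v : v \in C' -> rsubmx v \in <<r>>%VS.
Proof. by move=> /(memv_img rsub); rewrite limg_rsubmx_ext_code lfunE. Qed.

Hypothesis r_free : free r.

Lemma ext_code_ker_rsubmx : (C' :&: lker rsub = 0)%VS.
Proof.
have : (\dim C' <= size r)%N by rewrite -size_ext_gen dim_span.
have := limg_ker_dim rsub C'; rewrite limg_rsubmx_ext_code (eqnP r_free).
move=> dimE dim_le; apply/eqP; rewrite -dimv_eq0 -leqn0 -(leq_add2r (size r)).
by rewrite dimE.
Qed.

Lemma dim_ext_code : \dim C' = size r.
Proof.
by rewrite -(limg_dim_eq ext_code_ker_rsubmx) limg_rsubmx_ext_code (eqnP r_free).
Qed.

Lemma ext_code_rsubmx_eq0 v : v \in C' -> (rsubmx v == 0) = (v == 0).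
Proof.
move=> vC'; apply/eqP/eqP => [v_ker|->]; last exact: linear0.
apply/eqP; rewrite -memv0 -ext_code_ker_rsubmx memv_cap vC' memv_ker lfunE /=.
exact/eqP.
Qed.

Lemma supp_rsubmx_subset (u v : 'rV['F_2]_(n' + N)) :
  supp u \subset supp v -> supp (rsubmx u) \subset supp (rsubmx v).
Proof.
move/subsetP=> suv; apply/subsetP => j; rewrite !inE !mxE.
by move/(_ (rshift n' j)): suv; rewrite !inE.
Qed.

Lemma minimal_ext_code : minimal_code <<r>>%VS -> minimal_code C'.
Proof.
move=> min_r v1 v2 v1C' v2C' v1_neq0 v2_neq0 s12; apply/eqP.
rewrite -subr_eq0 -ext_code_rsubmx_eq0 ?rpredB // linearB subr_eq0 /=.
apply/eqP/min_r; rewrite ?rsubmx_ext_code ?ext_code_rsubmx_eq0 //.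
exact: supp_rsubmx_subset.
Qed.

Lemma wt_ext_gen i : (i < size r)%N ->
  wt (ext_gen n' r)`_i = ((i == 0%N) * n' + wt r`_i)%N.
Proof.
move=> lt_i; rewrite nth_ext_gen // wt_row_mx wt_const_mx.
by case: (i == 0%N); rewrite ?oner_eq0 ?eqxx.
Qed.

Variables lo hi : nat.
Hypothesis wt_r : forall c, c \in <<r>>%VS -> c != 0 -> (lo <= wt c <= hi)%N.

Lemma wt_ext_code_bounds v : v \in C' -> v != 0 -> (lo <= wt v <= n' + hi)%N.
Proof.
move=> vC' v_neq0; rewrite -[v]hsubmxK wt_row_mx.
have rv_neq0 : rsubmx v != 0 by rewrite ext_code_rsubmx_eq0.
have /andP[lo_le le_hi] := wt_r (rsubmx_ext_code vC') rv_neq0.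
by have := wt_le (lsubmx v); lia.
Qed.

Lemma min_weight_ext_code : (1 < size r)%N -> (0 < lo)%N -> wt r`_1 = lo ->
  min_weight C' lo.
Proof.
move=> size_r lo_gt0 wt_r1.
have wt_E1 : wt (ext_gen n' r)`_1 = lo by rewrite wt_ext_gen.
split.
  by rewrite -wt_E1; apply: is_nz_weightW; rewrite ?ext_gen_in_code ?wt_E1.
by move=> v vC' v_neq0; case/andP: (wt_ext_code_bounds vC' v_neq0).
Qed.

Lemma max_weight_ext_code : (0 < size r)%N -> (0 < hi)%N -> wt r`_0 = hi ->
  max_weight C' (n' + hi).
Proof.
move=> size_r hi_gt0 wt_r0.
have wt_E0 : wt (ext_gen n' r)`_0 = (n' + hi)%N by rewrite wt_ext_gen // wt_r0 mul1n.
split.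
  by rewrite -wt_E0; apply: is_nz_weightW; rewrite ?ext_gen_in_code ?wt_E0 ?ltn_addl.
move=> v vC'; have [->|v_neq0] := eqVneq v 0; first by rewrite wt0.
by case/andP: (wt_ext_code_bounds vC' v_neq0).
Qed.

End Extension.

Lemma expn2_identities m : (2 <= m)%N ->
  [/\ 2 ^ m = 2 * 2 ^ (m - 1), 2 ^ (2 * m) = 2 * 2 ^ (2 * m - 1),
      0 < 2 ^ (m - 1) & 4 * 2 ^ (m - 1) <= 2 ^ (2 * m - 1)]%N.
Proof.
move=> m_ge2; have e_m : (2 ^ m = 2 * 2 ^ (m - 1))%N.
  by rewrite -expnS; congr (2 ^ _)%N; lia.
have e_2m1 : (2 ^ (2 * m - 1) = 2 ^ (m - 1) * 2 ^ m)%N.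
  by rewrite -expnD; congr (2 ^ _)%N; lia.
have two_le : (2 <= 2 ^ (m - 1))%N by have := ltn_expl (m - 1) (isT : 1 < 2)%N; lia.
split=> //; last by rewrite e_2m1 e_m; nia.
  by rewrite -expnS; congr (2 ^ _)%N; lia.
by rewrite expn_gt0.
Qed.

Theorem proposition4p2 (m : nat) (hm : (2 <= m)%N)
  (C : {vspace 'rV['F_2]_(2 ^ (2 * m) - 1)})
  (hdim : \dim C = (3 * m)%N)
  (hweights : forall w, is_nz_weight C w <->
     w \in [:: (2 ^ (2 * m - 1) - 2 ^ (m - 1))%N; (2 ^ (2 * m - 1))%N;
               (2 ^ (2 * m - 1) + 2 ^ (m - 1))%N])
  (r : seq 'rV['F_2]_(2 ^ (2 * m) - 1))
  (hbasis : basis_of C r)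
  (hr1 : wt r`_0 = (2 ^ (2 * m - 1) + 2 ^ (m - 1))%N)
  (hr2 : wt r`_1 = (2 ^ (2 * m - 1) - 2 ^ (m - 1))%N) :
  let C' := ext_code (2 ^ (2 * m - 1) - 2 ^ m - 2 ^ (m - 1)) r in
  [/\ minimal_code C',
      \dim C' = (3 * m)%N,
      min_weight C' (2 ^ (2 * m - 1) - 2 ^ (m - 1))%N,
      max_weight C' (2 ^ (2 * m) - 2 ^ m)%N
    & ~ ashikhmin_barg C'].
Proof.
move=> C'.
have [e_m e_2m p_gt0 four_le] := expn2_identities hm.
have r_free : free r := basis_free hbasis.
have size_r : size r = (3 * m)%N.
  by rewrite -hdim (size_basis (X := in_tuple r) hbasis).
have wt_C c : c \in <<r>>%VS -> c != 0 ->
    (2 ^ (2 * m - 1) - 2 ^ (m - 1) <= wt c <= 2 ^ (2 * m - 1) + 2 ^ (m - 1))%N.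
  rewrite (span_basis hbasis) => cC c_neq0.
  have /hweights : is_nz_weight C (wt c) by exists c.
  by rewrite !inE => /or3P[] /eqP ->; lia.
pose n' := (2 ^ (2 * m - 1) - 2 ^ m - 2 ^ (m - 1))%N.
have min_C' := min_weight_ext_code n' r_free wt_C _ _ hr2.
have max_C' := max_weight_ext_code n' r_free wt_C _ _ hr1.
have -> : (2 ^ (2 * m) - 2 ^ m = n' + (2 ^ (2 * m - 1) + 2 ^ (m - 1)))%N.
  by rewrite /n'; lia.
split.
- apply: minimal_ext_code r_free _; apply: minimal_code_of_weights wt_C; lia.
- by rewrite /C' dim_ext_code.
- apply: min_C'; lia.
- apply: max_C'; lia.
apply: not_ashikhmin_barg (min_C' _ _) (max_C' _ _) _; lia.
Qed.
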